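(* Let $X$ be a proper geodesic $\mathrm{CAT}(-1)$ metric space and $H$ a horoball in $X$. For all $a,b\in\partial H$ with $d(a,b)\ge 4.056$ and every $a_0\in[a,b]$, we have $$a_0\in H\left[\tfrac23\min\{d(a_0,a),d(a_0,b)\}\right].$$
   Context: For $\xi\in\partial_\infty X$, $\beta_\xi(x,y)=\lim_{t\to\infty}(d(x,\rho(t))-d(y,\rho(t)))$ for any geodesic ray $\rho$ converging to $\xi$. If $H=\{y:\beta_\xi(x,y)\ge s\}$ is a horoball, its boundary horosphere is $\partial H=\{y:\beta_\xi(x,y)=s\}$ and, for $t\ge0$, $H[t]=\{y:\beta_\xi(x,y)\ge s+t\}$. *)

From Stdlib Require Import Reals Lra List.
Open Scope R_scope.

Set Implicit Arguments.
Section Metric.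
Variable X : Type.
Variable d : X -> X -> R.

Definition is_metric : Prop :=
  (forall x y, 0 <= d x y) /\
  (forall x y, d x y = 0 <-> x = y) /\
  (forall x y, d x y = d y x) /\
  (forall x y z, d x z <= d x y + d y z).

Definition open_set (U : X -> Prop) : Prop :=
  forall y, U y -> exists e, 0 < e /\ forall z, d y z < e -> U z.

Definition compact_set (K : X -> Prop) : Prop :=
  forall (I : Type) (U : I -> X -> Prop),
    (forall i, open_set (U i)) ->
    (forall y, K y -> exists i, U i y) ->
    exists l : list I, forall y, K y -> exists i, In i l /\ U i y.

Definition proper_space : Prop :=
  forall x r, compact_set (fun y => d x y <= r).

Definition geod_seg (c : R -> X) (L : R) (p q : X) : Prop :=
  0 <= L /\ c 0 = p /\ c L = q /\
  forall s t, 0 <= s <= L -> 0 <= t <= L -> d (c s) (c t) = Rabs (s - t).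

Definition geodesic_space : Prop :=
  forall p q, exists c L, geod_seg c L p q.

Definition geod_ray (rho : R -> X) : Prop :=
  forall s t, 0 <= s -> 0 <= t -> d (rho s) (rho t) = Rabs (s - t).

(* beta_xi(x,y) = l, where xi is the endpoint of the ray rho *)
Definition busemann_lim (rho : R -> X) (x y : X) (l : R) : Prop :=
  forall eps, 0 < eps -> exists T, forall t, T <= t ->
    Rabs (d x (rho t) - d y (rho t) - l) < eps.

(* y belongs to H[t], where H = {y : beta_xi(x,y) >= s}, xi = rho(+oo) *)
Definition in_horoball_t (rho : R -> X) (x : X) (s t : R) (y : X) : Prop :=
  exists l, busemann_lim rho x y l /\ s + t <= l.

(* y belongs to the horosphere dH = {y : beta_xi(x,y) = s} *)
Definition in_horosphere (rho : R -> X) (x : X) (s : R) (y : X) : Prop :=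
  busemann_lim rho x y s.

End Metric.

(* The hyperbolic plane: hyperboloid model in R^3 *)
Definition H2pt (u : R * R * R) : Prop :=
  let '(u0, u1, u2) := u in u0 * u0 - u1 * u1 - u2 * u2 = 1 /\ 0 < u0.

Definition acosh (z : R) : R := ln (z + sqrt (z * z - 1)).

Definition dH2 (u v : R * R * R) : R :=
  let '(u0, u1, u2) := u in let '(v0, v1, v2) := v in
  acosh (u0 * v0 - u1 * v1 - u2 * v2).

(* A side of a geodesic triangle: geodesic c of length L, together with the
   endpoints A, B of the corresponding side of the comparison triangle. *)
Definition side (X : Type) : Type := ((R -> X) * R * (R * R * R) * (R * R * R))%type.

(* CAT(-1) inequality for a point on side S1 and a point on side S2:
   xb, yb are the comparison points (the points on the comparison sides
   at the corresponding distances from the endpoints). *)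
Definition cat_pair (X : Type) (d : X -> X -> R) (S1 S2 : side X) : Prop :=
  let '(c1, L1, A1, B1) := S1 in let '(c2, L2, A2, B2) := S2 in
  forall s t xb yb,
    0 <= s <= L1 -> 0 <= t <= L2 -> H2pt xb -> H2pt yb ->
    dH2 A1 xb = s -> dH2 xb B1 = L1 - s ->
    dH2 A2 yb = t -> dH2 yb B2 = L2 - t ->
    d (c1 s) (c2 t) <= dH2 xb yb.

Definition CAT_minus1 (X : Type) (d : X -> X -> R) : Prop :=
  forall (p q r : X) (c1 c2 c3 : R -> X) (L1 L2 L3 : R) (P Q Rr : R * R * R),
    geod_seg d c1 L1 p q -> geod_seg d c2 L2 q r -> geod_seg d c3 L3 r p ->
    H2pt P -> H2pt Q -> H2pt Rr ->
    dH2 P Q = L1 -> dH2 Q Rr = L2 -> dH2 Rr P = L3 ->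
    let S := (c1, L1, P, Q) :: (c2, L2, Q, Rr) :: (c3, L3, Rr, P) :: nil in
    forall S1 S2, In S1 S -> In S2 S -> cat_pair d S1 S2.

(* Let y = c(u) and let gp = lim (d(p, rho t) - t) be the Busemann function of the ray
   at p.  CAT(-1) comparison with a hyperbolic triangle gives, for every z,
     cosh d(y, z) <= (sinh(L - u) cosh d(a, z) + sinh u cosh d(b, z)) / sinh L,
   hence e^{d(y,z)} <= al e^{d(a,z)} + be e^{d(b,z)} + (al + be) with the weights
   al = sinh(L - u) / sinh L and be = sinh u / sinh L.  Taking z = rho t, t -> oo, and
   using ga = gb (a and b lie on the same horosphere) yields e^{gy} <= (al + be) e^{ga},
   that is beta(x, y) = gx - gy >= s - ln (al + be).
   Finally al + be <= exp (- 2/3 min(u, L - u)) when L >= 4.056, an elementary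
   inequality that reduces to the sign of a sextic polynomial. *)

From Stdlib Require Import Reals Psatz Lra Classical Factorial.
Open Scope R_scope.

Lemma exp_le x y : x <= y -> exp x <= exp y.
Proof. intros [Hlt | ->]; [now apply Rlt_le, exp_increasing | apply Rle_refl]. Qed.

Lemma exp_le_inv x y : exp x <= exp y -> x <= y.
Proof. intros H. apply Rnot_lt_le. intros Hlt. apply exp_increasing in Hlt. lra. Qed.

Lemma exp_pow x n : exp x ^ n = exp (INR n * x).
Proof.
  induction n as [| n IH]; simpl pow; [now rewrite Rmult_0_l, exp_0 |].
  rewrite IH, S_INR, <- exp_plus. f_equal. ring.
Qed.

Lemma exp_ge_taylor x N :
  0 <= x -> sum_f_R0 (fun k => / INR (fact k) * x ^ k) N <= exp x.
Proof.
  intros Hx. unfold exp. destruct (exist_exp x) as (l & Hl). simpl.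
  refine (growing_ineq _ _ _ Hl N). intros n. cbn [sum_f_R0].
  assert (0 <= / INR (fact (S n)) * x ^ S n).
  { apply Rmult_le_pos; [apply Rlt_le, Rinv_0_lt_compat, INR_fact_lt_0 | now apply pow_le]. }
  lra.
Qed.

Lemma cosh_sqr_sub_sinh_sqr x : cosh x * cosh x - sinh x * sinh x = 1.
Proof. unfold cosh, sinh. rewrite exp_Ropp. pose proof (exp_pos x). field. lra. Qed.

Lemma cosh_add x y : cosh (x + y) = cosh x * cosh y + sinh x * sinh y.
Proof. unfold cosh, sinh. rewrite Ropp_plus_distr, !exp_plus. field. Qed.

Lemma cosh_sub x y : cosh (x - y) = cosh x * cosh y - sinh x * sinh y.
Proof. unfold cosh, sinh, Rminus. rewrite Ropp_plus_distr, Ropp_involutive, !exp_plus. field. Qed.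

Lemma sinh_sub x y : sinh (x - y) = sinh x * cosh y - cosh x * sinh y.
Proof. unfold cosh, sinh, Rminus. rewrite Ropp_plus_distr, Ropp_involutive, !exp_plus. field. Qed.

Lemma cosh_opp x : cosh (- x) = cosh x.
Proof. unfold cosh. rewrite Ropp_involutive. lra. Qed.

Lemma exp_le_2cosh x : exp x <= 2 * cosh x.
Proof. unfold cosh. pose proof (exp_pos (- x)). lra. Qed.

Lemma two_cosh_le_exp_add1 x : 0 <= x -> 2 * cosh x <= exp x + 1.
Proof.
  intros Hx. unfold cosh. enough (exp (- x) <= 1) by lra.
  rewrite <- exp_0. apply exp_le. lra.
Qed.

Lemma sinh_le x y : x <= y -> sinh x <= sinh y.
Proof. intros [Hlt | ->]; [now apply Rlt_le, sinh_lt | apply Rle_refl]. Qed.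

Lemma sinh_nonneg x : 0 <= x -> 0 <= sinh x.
Proof. intros Hx. rewrite <- sinh_0. now apply sinh_le. Qed.

Lemma sinh_pos x : 0 < x -> 0 < sinh x.
Proof. intros Hx. rewrite <- sinh_0. now apply sinh_lt. Qed.

Lemma sinh_div_nonneg u L : 0 <= u -> 0 < L -> 0 <= sinh u / sinh L.
Proof.
  intros Hu HL. apply Rmult_le_pos; [now apply sinh_nonneg |].
  apply Rlt_le, Rinv_0_lt_compat. now apply sinh_pos.
Qed.

Lemma cosh_ge_1 x : 1 <= cosh x.
Proof.
  unfold cosh. rewrite exp_Ropp. pose proof (exp_pos x) as He.
  assert (E : (exp x + / exp x) / 2 - 1 = (exp x - 1) * (exp x - 1) / (2 * exp x))
    by (field; lra).
  assert (0 <= (exp x - 1) * (exp x - 1) / (2 * exp x)).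
  { apply Rmult_le_pos; [apply Rle_0_sqr | apply Rlt_le, Rinv_0_lt_compat; lra]. }
  lra.
Qed.

Lemma cosh_le x y : 0 <= x <= y -> cosh x <= cosh y.
Proof.
  intros Hxy.
  pose proof (sinh_nonneg x (proj1 Hxy)). pose proof (sinh_le x y (proj2 Hxy)).
  pose proof (cosh_sqr_sub_sinh_sqr x). pose proof (cosh_sqr_sub_sinh_sqr y).
  pose proof (cosh_ge_1 x). pose proof (cosh_ge_1 y). nra.
Qed.

Lemma cosh_Rabs x : cosh (Rabs x) = cosh x.
Proof. unfold Rabs. destruct (Rcase_abs x); [apply cosh_opp | reflexivity]. Qed.

Lemma cosh_le_Rabs x y : Rabs x <= Rabs y -> cosh x <= cosh y.
Proof.
  intros H. rewrite <- (cosh_Rabs x), <- (cosh_Rabs y).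
  apply cosh_le. split; [apply Rabs_pos | exact H].
Qed.

Lemma acosh_cosh x : 0 <= x -> acosh (cosh x) = x.
Proof.
  intros Hx. unfold acosh.
  replace (cosh x * cosh x - 1) with (sinh x * sinh x)
    by (pose proof (cosh_sqr_sub_sinh_sqr x); lra).
  rewrite sqrt_square by (now apply sinh_nonneg).
  replace (cosh x + sinh x) with (exp x) by (unfold cosh, sinh; field).
  apply ln_exp.
Qed.

Lemma cosh_acosh y : 1 <= y -> cosh (acosh y) = y.
Proof.
  intros Hy. unfold acosh, cosh.
  set (r := sqrt (y * y - 1)).
  assert (Hr : 0 <= r) by apply sqrt_pos.
  assert (Hrr : r * r = y * y - 1) by (apply sqrt_sqrt; nra).
  rewrite exp_Ropp, exp_ln by lra.
  assert (Hinv : / (y + r) = y - r) by (field_simplify_eq; [lra | nra]).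
  rewrite Hinv. lra.
Qed.

(* The threshold 4.056 = 6 * 0.676 of the theorem: e^0.676 has to exceed the largest root
   1.96595... of Q^6 - 2 Q^5 + 1. *)
Lemma exp_0676_ge : 196596 / 100000 <= exp (676 / 1000).
Proof.
  eapply Rle_trans; [| apply (exp_ge_taylor _ 6); lra].
  simpl. lra.
Qed.

Lemma sextic_root_bound Q : 196596 / 100000 <= Q -> 0 <= Q ^ 6 - 2 * Q ^ 5 + 1.
Proof.
  (* All coefficients of the polynomial in t = Q - 1.96596 are positive. *)
  intros HQ. set (t := Q - 196596 / 100000).
  assert (Ht : 0 <= t) by (unfold t; lra).
  replace Q with (196596 / 100000 + t) by (unfold t; ring).
  assert (0 <= t ^ 2) by now apply pow_le. assert (0 <= t ^ 3) by now apply pow_le.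
  assert (0 <= t ^ 4) by now apply pow_le. assert (0 <= t ^ 5) by now apply pow_le.
  assert (0 <= t ^ 6) by now apply pow_le.
  ring_simplify. lra.
Qed.

Lemma sextic_nonpos Y Q :
  1 <= Y <= Q -> 196596 / 100000 <= Q -> Y ^ 6 - (Q ^ 6 + 1) * Y + Q ^ 6 <= 0.
Proof.
  intros HY HQ. pose proof (sextic_root_bound Q HQ) as Hg.
  assert (HsQ : 1 + Q + Q ^ 2 + Q ^ 3 + Q ^ 4 + Q ^ 5 <= Q ^ 6 + 1).
  { apply Rmult_le_reg_l with (Q - 1); [lra |].
    assert (E : (Q - 1) * (Q ^ 6 + 1) - (Q - 1) * (1 + Q + Q ^ 2 + Q ^ 3 + Q ^ 4 + Q ^ 5)
                = Q * (Q ^ 6 - 2 * Q ^ 5 + 1)) by ring.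
    assert (0 <= Q * (Q ^ 6 - 2 * Q ^ 5 + 1)) by (apply Rmult_le_pos; lra).
    lra. }
  assert (HsY : 1 + Y + Y ^ 2 + Y ^ 3 + Y ^ 4 + Y ^ 5 <= 1 + Q + Q ^ 2 + Q ^ 3 + Q ^ 4 + Q ^ 5).
  { assert (Hpow : forall n, Y ^ n <= Q ^ n) by (intros; apply pow_incr; lra).
    pose proof (Hpow 2%nat). pose proof (Hpow 3%nat). pose proof (Hpow 4%nat).
    pose proof (Hpow 5%nat). lra. }
  replace (Y ^ 6 - (Q ^ 6 + 1) * Y + Q ^ 6)
    with ((Y - 1) * ((1 + Y + Y ^ 2 + Y ^ 3 + Y ^ 4 + Y ^ 5) - (Q ^ 6 + 1))) by ring.
  assert (0 <= Y - 1) by lra. nra.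
Qed.

Lemma sinh_sub_add_le D u :
  4056 / 1000 <= D -> 0 <= u <= D / 2 -> sinh (D - u) + sinh u <= exp (- (2 / 3 * u)) * sinh D.
Proof.
  intros HD Hu. unfold sinh.
  set (Q := exp (D / 6)). set (Y := exp (u / 3)).
  assert (EQ : exp D = Q ^ 6) by (unfold Q; rewrite exp_pow; f_equal; simpl; field).
  assert (EY : exp u = Y ^ 3) by (unfold Y; rewrite exp_pow; f_equal; simpl; field).
  assert (EDu : exp (D - u) = Q ^ 6 / Y ^ 3)
    by (unfold Rminus; rewrite exp_plus, exp_Ropp, EQ, EY; reflexivity).
  assert (E2 : exp (- (2 / 3 * u)) = / Y ^ 2)
    by (unfold Y; rewrite exp_Ropp, exp_pow; do 2 f_equal; simpl; field).
  rewrite E2, !exp_Ropp, EDu, EQ, EY.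
  assert (HQ : 196596 / 100000 <= Q).
  { eapply Rle_trans; [apply exp_0676_ge | apply exp_le; lra]. }
  assert (HY : 1 <= Y <= Q).
  { split; [rewrite <- exp_0 |]; apply exp_le; lra. }
  pose proof (sextic_nonpos Y Q HY HQ) as Hsextic.
  assert (HY3 : 0 < Y ^ 3) by (apply pow_lt; lra).
  assert (HQ6 : 1 <= Q ^ 6) by (apply pow_R1_Rle; lra).
  apply Rminus_le.
  replace ((Q ^ 6 / Y ^ 3 - / (Q ^ 6 / Y ^ 3)) / 2 + (Y ^ 3 - / Y ^ 3) / 2
           - / Y ^ 2 * ((Q ^ 6 - / Q ^ 6) / 2))
    with ((Q ^ 6 - 1) * (Y ^ 6 - (Q ^ 6 + 1) * Y + Q ^ 6) / (2 * Y ^ 3 * Q ^ 6))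
    by (field; lra).
  assert (Hnum : (Q ^ 6 - 1) * (Y ^ 6 - (Q ^ 6 + 1) * Y + Q ^ 6) <= 0).
  { rewrite <- (Rmult_0_r (Q ^ 6 - 1)). apply Rmult_le_compat_l; lra. }
  unfold Rdiv. rewrite <- (Rmult_0_l (/ (2 * Y ^ 3 * Q ^ 6))).
  apply Rmult_le_compat_r; [| exact Hnum].
  apply Rlt_le, Rinv_0_lt_compat. repeat apply Rmult_lt_0_compat; lra.
Qed.

Lemma sinh_weights_le L u :
  4056 / 1000 <= L -> 0 <= u <= L ->
  (sinh (L - u) + sinh u) / sinh L <= exp (- (2 / 3 * Rmin u (L - u))).
Proof.
  intros HL Hu.
  assert (HsL : 0 < sinh L) by (apply sinh_pos; lra).
  apply Rmult_le_reg_r with (sinh L); [exact HsL |].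
  replace ((sinh (L - u) + sinh u) / sinh L * sinh L) with (sinh (L - u) + sinh u)
    by (field; lra).
  destruct (Rle_dec u (L / 2)).
  - rewrite Rmin_left by lra. apply sinh_sub_add_le; lra.
  - rewrite Rmin_right by lra.
    pose proof (sinh_sub_add_le L (L - u) HL ltac:(lra)) as Hsym.
    replace (L - (L - u)) with u in Hsym by ring. lra.
Qed.

Definition minkowski (u v : R * R * R) : R :=
  let '(u0, u1, u2) := u in let '(v0, v1, v2) := v in u0 * v0 - u1 * v1 - u2 * v2.

Lemma minkowski_comm u v : minkowski u v = minkowski v u.
Proof. destruct u as [[u0 u1] u2], v as [[v0 v1] v2]. simpl. ring. Qed.

Lemma minkowski_self u : H2pt u -> minkowski u u = 1.
Proof. destruct u as [[u0 u1] u2]. simpl. lra. Qed.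

(* The reverse Cauchy-Schwarz inequality on the upper sheet of the hyperboloid. *)
Lemma minkowski_ge_1 u v : H2pt u -> H2pt v -> 1 <= minkowski u v.
Proof.
  destruct u as [[u0 u1] u2], v as [[v0 v1] v2]. simpl. intros [Hu Hu0] [Hv Hv0].
  set (p := u1 * v1 + u2 * v2).
  assert (Hu1 : 1 <= u0)
    by (pose proof (Rle_0_sqr u1); pose proof (Rle_0_sqr u2); unfold Rsqr in *; nra).
  assert (Hv1 : 1 <= v0)
    by (pose proof (Rle_0_sqr v1); pose proof (Rle_0_sqr v2); unfold Rsqr in *; nra).
  assert (Hcs : p * p <= (u0 * u0 - 1) * (v0 * v0 - 1)).
  { replace ((u0 * u0 - 1) * (v0 * v0 - 1))
      with (p * p + (u1 * v2 - u2 * v1) * (u1 * v2 - u2 * v1))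
      by (replace (u0 * u0 - 1) with (u1 * u1 + u2 * u2) by lra;
          replace (v0 * v0 - 1) with (v1 * v1 + v2 * v2) by lra; unfold p; ring).
    pose proof (Rle_0_sqr (u1 * v2 - u2 * v1)). unfold Rsqr in *. lra. }
  assert (Hsq : p * p <= (u0 * v0 - 1) * (u0 * v0 - 1)).
  { pose proof (Rle_0_sqr (u0 - v0)). unfold Rsqr in *. lra. }
  assert (0 <= u0 * v0 - 1) by nra.
  assert (p <= u0 * v0 - 1) by nra.
  unfold p in *. lra.
Qed.

Lemma dH2_mink u v : dH2 u v = acosh (minkowski u v).
Proof. now destruct u as [[u0 u1] u2], v as [[v0 v1] v2]. Qed.

Lemma cosh_dH2 u v : H2pt u -> H2pt v -> cosh (dH2 u v) = minkowski u v.
Proof. intros Hu Hv. rewrite dH2_mink. apply cosh_acosh, minkowski_ge_1; assumption. Qed.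

Lemma dH2_cosh u v r : 0 <= r -> minkowski u v = cosh r -> dH2 u v = r.
Proof. intros Hr Huv. rewrite dH2_mink, Huv. now apply acosh_cosh. Qed.

Definition h2_line (t : R) : R * R * R := (cosh t, sinh t, 0).

Lemma H2pt_h2_line t : H2pt (h2_line t).
Proof.
  simpl. pose proof (cosh_sqr_sub_sinh_sqr t). pose proof (cosh_ge_1 t). split; lra.
Qed.

Lemma minkowski_h2_line s t : minkowski (h2_line s) (h2_line t) = cosh (t - s).
Proof. simpl. rewrite cosh_sub. ring. Qed.

Lemma dH2_h2_line s t : s <= t -> dH2 (h2_line s) (h2_line t) = t - s.
Proof. intros Hst. apply dH2_cosh; [lra | apply minkowski_h2_line]. Qed.

(* The third vertex of a comparison triangle with side [h2_line 0, h2_line L] and the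
   other side lengths A, B, together with the hyperbolic Stewart formula for the distance
   from it to the points of that side. *)
Lemma h2_triangle_apex L A B :
  0 < L -> 0 <= A -> 0 <= B -> B <= L + A -> L <= A + B -> A <= L + B ->
  exists P, H2pt P /\
    forall u, minkowski (h2_line u) P = (sinh (L - u) * cosh A + sinh u * cosh B) / sinh L.
Proof.
  intros HL HA HB HBle HLle HAle.
  assert (HsL : 0 < sinh L) by now apply sinh_pos.
  set (z1 := (cosh A * cosh L - cosh B) / sinh L).
  assert (Hz1 : - sinh A <= z1 <= sinh A).
  { assert (Hhi : cosh B <= cosh A * cosh L + sinh A * sinh L).
    { rewrite Rmult_comm, (Rmult_comm (sinh A)), <- cosh_add.
      apply cosh_le_Rabs. rewrite !Rabs_right; lra. }
    assert (Hlo : cosh A * cosh L - sinh A * sinh L <= cosh B).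
    { rewrite Rmult_comm, (Rmult_comm (sinh A)), <- cosh_sub.
      apply cosh_le_Rabs. rewrite (Rabs_right B) by lra. apply Rabs_le. lra. }
    unfold z1. split; apply Rmult_le_reg_r with (sinh L); try field_simplify; lra. }
  set (z2 := sqrt (cosh A * cosh A - z1 * z1 - 1)).
  assert (Hz2 : z2 * z2 = cosh A * cosh A - z1 * z1 - 1).
  { apply sqrt_sqrt. pose proof (cosh_sqr_sub_sinh_sqr A). pose proof (sinh_nonneg A HA). nra. }
  exists (cosh A, z1, z2). split.
  - simpl. pose proof (cosh_ge_1 A). split; lra.
  - intros u. simpl. unfold z1. rewrite sinh_sub. field. lra.
Qed.

Section Geodesics.

Context {X : Type} {d : X -> X -> R}.

Lemma geod_seg_dist_start {c L p q u} :
  geod_seg d c L p q -> 0 <= u <= L -> d (c u) p = u.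
Proof.
  intros (HL & Hc0 & _ & Hcd) Hu. rewrite <- Hc0, Hcd by lra.
  rewrite Rminus_0_r. apply Rabs_right. lra.
Qed.

Lemma geod_seg_dist_end {c L p q u} :
  geod_seg d c L p q -> 0 <= u <= L -> d (c u) q = L - u.
Proof.
  intros (HL & _ & HcL & Hcd) Hu. rewrite <- HcL, Hcd by lra.
  rewrite Rabs_left1 by lra. ring.
Qed.

Lemma geod_seg_length {c L p q} : geod_seg d c L p q -> d p q = L.
Proof.
  intros Hc. pose proof Hc as (HL & Hc0 & _). rewrite <- Hc0 at 1.
  rewrite (geod_seg_dist_end Hc) by lra. ring.
Qed.

Hypothesis Hmet : is_metric d.
Hypothesis Hgeod : geodesic_space d.
Hypothesis Hcat : CAT_minus1 d.

Lemma cat_minus1_cosh_le {c L a b u} z :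
  geod_seg d c L a b -> 0 < L -> 0 <= u <= L ->
  cosh (d (c u) z) <= (sinh (L - u) * cosh (d a z) + sinh u * cosh (d b z)) / sinh L.
Proof.
  intros Hc HL Hu. destruct Hmet as (Hpos & _ & Hsym & Htri).
  destruct (Hgeod b z) as (c2 & L2 & Hc2). destruct (Hgeod z a) as (c3 & L3 & Hc3).
  pose proof (geod_seg_length Hc) as HLab.
  pose proof (geod_seg_length Hc2) as HL2. pose proof (geod_seg_length Hc3) as HL3.
  rewrite Hsym in HL3.
  assert (HsL : 0 < sinh L) by now apply sinh_pos.
  destruct (h2_triangle_apex L (d a z) (d b z)) as (P & HP & HPu);
    [exact HL | apply Hpos | apply Hpos | ..].
  { pose proof (Htri b a z). rewrite (Hsym b a) in *. lra. }
  { pose proof (Htri a z b). rewrite (Hsym z b) in *. lra. }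
  { pose proof (Htri a b z). lra. }
  assert (HPb : dH2 (h2_line L) P = d b z).
  { apply dH2_cosh; [apply Hpos |]. rewrite HPu, Rminus_diag, sinh_0. field. lra. }
  assert (HPa : dH2 P (h2_line 0) = d a z).
  { apply dH2_cosh; [apply Hpos |]. rewrite minkowski_comm, HPu, Rminus_0_r, sinh_0. field. lra. }
  pose proof (Hcat _ _ _ _ _ _ _ _ _ _ _ _ Hc Hc2 Hc3 (H2pt_h2_line 0) (H2pt_h2_line L) HP)
    as Hcmp.
  specialize (Hcmp ltac:(rewrite dH2_h2_line; lra) ltac:(congruence) ltac:(congruence)).
  cbv zeta in Hcmp.
  specialize (Hcmp _ _ (or_introl eq_refl) (or_intror (or_introl eq_refl))).
  cbn beta iota delta [cat_pair] in Hcmp.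
  (* Compare c u on the first side with the endpoint z = c2 L2 of the second side. *)
  assert (Hdist : d (c u) z <= dH2 (h2_line u) P).
  { assert (Hz : c2 L2 = z) by apply Hc2. rewrite <- Hz.
    apply Hcmp; auto using H2pt_h2_line.
    - split; [rewrite <- HL2; apply Hpos | lra].
    - rewrite dH2_h2_line; lra.
    - rewrite dH2_h2_line; lra.
    - congruence.
    - apply dH2_cosh; [lra |]. now rewrite Rminus_diag, cosh_0, minkowski_self. }
  rewrite <- HPu, <- cosh_dH2 by auto using H2pt_h2_line.
  apply cosh_le. split; [apply Hpos | exact Hdist].
Qed.

Lemma cat_minus1_exp_le {c L a b u} z :
  geod_seg d c L a b -> 0 < L -> 0 <= u <= L ->
  exp (d (c u) z) <=
    sinh (L - u) / sinh L * exp (d a z) + sinh u / sinh L * exp (d b z)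
    + (sinh (L - u) / sinh L + sinh u / sinh L).
Proof.
  intros Hc HL Hu. destruct Hmet as (Hpos & _).
  pose proof (cat_minus1_cosh_le z Hc HL Hu) as Hcosh.
  replace ((sinh (L - u) * cosh (d a z) + sinh u * cosh (d b z)) / sinh L)
    with (sinh (L - u) / sinh L * cosh (d a z) + sinh u / sinh L * cosh (d b z))
    in Hcosh by (field; apply Rgt_not_eq, sinh_pos, HL).
  set (al := sinh (L - u) / sinh L) in *. set (be := sinh u / sinh L) in *.
  assert (Hal : 0 <= al) by (apply sinh_div_nonneg; lra).
  assert (Hbe : 0 <= be) by (apply sinh_div_nonneg; lra).
  assert (al * (2 * cosh (d a z)) <= al * (exp (d a z) + 1))
    by (apply Rmult_le_compat_l, two_cosh_le_exp_add1; auto).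
  assert (be * (2 * cosh (d b z)) <= be * (exp (d b z) + 1))
    by (apply Rmult_le_compat_l, two_cosh_le_exp_add1; auto).
  pose proof (exp_le_2cosh (d (c u) z)). lra.
Qed.

End Geodesics.

(* [g] = lim (d p (rho t) - t), the Busemann function of the ray at [p]; the map
   [t |-> d p (rho t) - t] is nonincreasing, so [g] is also its infimum. *)
Definition is_busemann {X : Type} (d : X -> X -> R) (rho : R -> X) (p : X) (g : R) : Prop :=
  (forall t, 0 <= t -> g <= d p (rho t) - t) /\
  (forall eps, 0 < eps -> exists T, forall t, T <= t -> d p (rho t) - t <= g + eps).

Section Busemann.

Context {X : Type} {d : X -> X -> R} {rho : R -> X}.

Lemma busemann_exists p :
  is_metric d -> geod_ray d rho -> exists g, is_busemann d rho p g.
Proof.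
  intros (_ & _ & Hsym & Htri) Hrho.
  assert (Hdecr : forall t0 t, 0 <= t0 <= t -> d p (rho t) - t <= d p (rho t0) - t0).
  { intros t0 t Ht. pose proof (Htri p (rho t0) (rho t)) as H.
    rewrite Hrho, Rabs_left1 in H by lra. lra. }
  set (E := fun v => exists t, 0 <= t /\ v = t - d p (rho t)).
  assert (HE : bound E).
  { exists (d p (rho 0)). intros v (t & Ht & ->). pose proof (Htri (rho 0) p (rho t)) as H.
    rewrite Hrho, Rabs_left1, Hsym in H by lra. lra. }
  destruct (completeness E HE) as (m & Hub & Hlub).
  { exists (0 - d p (rho 0)), 0. split; lra. }
  exists (- m). split.
  - intros t Ht. enough (t - d p (rho t) <= m) by lra. apply Hub. now exists t.
  - intros eps Heps.
    assert (Hclose : exists t0, 0 <= t0 /\ m - eps < t0 - d p (rho t0)).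
    { apply NNPP. intros Hn. enough (m <= m - eps) by lra. apply Hlub.
      intros v (t & Ht & ->). apply Rnot_lt_le. intros Hlt. apply Hn. now exists t. }
    destruct Hclose as (t0 & Ht0 & Hlt). exists t0. intros t Ht.
    pose proof (Hdecr t0 t (conj Ht0 Ht)). lra.
Qed.

Lemma busemann_lim_sub {p q gp gq} :
  is_busemann d rho p gp -> is_busemann d rho q gq -> busemann_lim d rho p q (gp - gq).
Proof.
  intros (Hp_lo & Hp_hi) (Hq_lo & Hq_hi) eps Heps.
  destruct (Hp_hi (eps / 2)) as (Tp & HTp); [lra |].
  destruct (Hq_hi (eps / 2)) as (Tq & HTq); [lra |].
  exists (Rmax 0 (Rmax Tp Tq)). intros t Ht.
  pose proof (Rmax_l 0 (Rmax Tp Tq)). pose proof (Rmax_r 0 (Rmax Tp Tq)).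
  pose proof (Rmax_l Tp Tq). pose proof (Rmax_r Tp Tq).
  specialize (HTp t ltac:(lra)). specialize (HTq t ltac:(lra)).
  specialize (Hp_lo t ltac:(lra)). specialize (Hq_lo t ltac:(lra)).
  apply Rabs_def1; lra.
Qed.

Lemma busemann_lim_unique {p q l1 l2} :
  busemann_lim d rho p q l1 -> busemann_lim d rho p q l2 -> l1 = l2.
Proof.
  enough (Hle : forall l l', busemann_lim d rho p q l -> busemann_lim d rho p q l' -> l <= l')
    by (intros; apply Rle_antisym; auto).
  intros l l' Hl Hl'. apply Rle_plus_epsilon. intros eps Heps.
  destruct (Hl (eps / 2)) as (T & HT); [lra |].
  destruct (Hl' (eps / 2)) as (T' & HT'); [lra |].
  specialize (HT (Rmax T T') (Rmax_l _ _)). specialize (HT' (Rmax T T') (Rmax_r _ _)).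
  apply Rabs_def2 in HT, HT'. lra.
Qed.

Lemma busemann_exp_le {p q r gp gq gr} al be C :
  0 <= al -> 0 <= be -> 0 <= C ->
  is_busemann d rho p gp -> is_busemann d rho q gq -> is_busemann d rho r gr ->
  (forall z, exp (d r z) <= al * exp (d p z) + be * exp (d q z) + C) ->
  exp gr <= al * exp gp + be * exp gq.
Proof.
  intros Hal Hbe HC (_ & Hp) (_ & Hq) (Hr & _) Hz.
  set (S := al * exp gp + be * exp gq).
  assert (HS : 0 <= S) by (pose proof (exp_pos gp); pose proof (exp_pos gq); unfold S; nra).
  enough (Heta : forall eta, 0 < eta -> exp gr <= S + eta * (S + C)).
  { apply Rle_plus_epsilon. intros eps Heps.
    set (eta := eps / (S + C + 1)).
    assert (Heta_pos : 0 < eta) by (apply Rdiv_lt_0_compat; lra).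
    assert (eta * (S + C) <= eps).
    { replace eps with (eta * (S + C + 1)) by (unfold eta; field; lra). nra. }
    specialize (Heta eta Heta_pos). lra. }
  intros eta Heta.
  (* Take [t] large for both Busemann limits (up to a factor [1 + eta]) and [e^-t <= eta]. *)
  destruct (Hp (ln (1 + eta))) as (Tp & HTp); [rewrite <- ln_1; apply ln_increasing; lra |].
  destruct (Hq (ln (1 + eta))) as (Tq & HTq); [rewrite <- ln_1; apply ln_increasing; lra |].
  set (t := Rmax (Rmax Tp Tq) (Rmax 0 (ln (/ eta)))).
  assert (Ht : Tp <= t /\ Tq <= t /\ 0 <= t /\ ln (/ eta) <= t).
  { unfold t. pose proof (Rmax_l Tp Tq). pose proof (Rmax_r Tp Tq).
    pose proof (Rmax_l 0 (ln (/ eta))). pose proof (Rmax_r 0 (ln (/ eta))).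
    pose proof (Rmax_l (Rmax Tp Tq) (Rmax 0 (ln (/ eta)))).
    pose proof (Rmax_r (Rmax Tp Tq) (Rmax 0 (ln (/ eta)))). lra. }
  destruct Ht as (HtTp & HtTq & Ht0 & Ht_eta).
  assert (Er : exp t * exp gr <= exp (d r (rho t))).
  { rewrite <- exp_plus. apply exp_le. specialize (Hr t Ht0). lra. }
  assert (Ep : exp (d p (rho t)) <= exp t * exp gp * (1 + eta)).
  { rewrite <- (exp_ln (1 + eta)), <- !exp_plus by lra. apply exp_le.
    specialize (HTp t HtTp). lra. }
  assert (Eq : exp (d q (rho t)) <= exp t * exp gq * (1 + eta)).
  { rewrite <- (exp_ln (1 + eta)), <- !exp_plus by lra. apply exp_le.
    specialize (HTq t HtTq). lra. }
  assert (Et : 1 <= eta * exp t).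
  { rewrite <- (Rinv_r eta) by lra. apply Rmult_le_compat_l; [lra |].
    rewrite <- (exp_ln (/ eta)) by (apply Rinv_0_lt_compat; lra). now apply exp_le. }
  specialize (Hz (rho t)).
  pose proof (exp_pos t) as Hexp_t.
  apply Rmult_le_reg_l with (exp t); [exact Hexp_t |].
  assert (al * exp (d p (rho t)) <= al * (exp t * exp gp * (1 + eta)))
    by (apply Rmult_le_compat_l; lra).
  assert (be * exp (d q (rho t)) <= be * (exp t * exp gq * (1 + eta)))
    by (apply Rmult_le_compat_l; lra).
  assert (C <= C * (eta * exp t)) by nra.
  unfold S. lra.
Qed.

End Busemann.

Theorem lemma2p12 (X : Type) (d : X -> X -> R)
  (Hmet : is_metric d) (Hprop : proper_space d) (Hgeod : geodesic_space d)
  (Hcat : CAT_minus1 d)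
  (rho : R -> X) (Hrho : geod_ray d rho) (x : X) (s : R)
  (a b : X) (Ha : in_horosphere d rho x s a) (Hb : in_horosphere d rho x s b)
  (Hab : 4056 / 1000 <= d a b)
  (c : R -> X) (L : R) (Hc : geod_seg d c L a b) (u : R) (Hu : 0 <= u <= L) :
  in_horoball_t d rho x s (2 / 3 * Rmin (d (c u) a) (d (c u) b)) (c u).
Proof.
  rewrite (geod_seg_length Hc) in Hab.
  rewrite (geod_seg_dist_start Hc Hu), (geod_seg_dist_end Hc Hu).
  destruct (busemann_exists x Hmet Hrho) as (gx & Hgx).
  destruct (busemann_exists a Hmet Hrho) as (ga & Hga).
  destruct (busemann_exists b Hmet Hrho) as (gb & Hgb).
  destruct (busemann_exists (c u) Hmet Hrho) as (gy & Hgy).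
  assert (Hsa : s = gx - ga) by exact (busemann_lim_unique Ha (busemann_lim_sub Hgx Hga)).
  assert (Hsb : s = gx - gb) by exact (busemann_lim_unique Hb (busemann_lim_sub Hgx Hgb)).
  exists (gx - gy). split; [exact (busemann_lim_sub Hgx Hgy) |].
  set (al := sinh (L - u) / sinh L). set (be := sinh u / sinh L).
  assert (Hal : 0 <= al) by (apply sinh_div_nonneg; lra).
  assert (Hbe : 0 <= be) by (apply sinh_div_nonneg; lra).
  assert (Hgy_exp : exp gy <= al * exp ga + be * exp gb).
  { apply (busemann_exp_le al be (al + be) Hal Hbe ltac:(lra) Hga Hgb Hgy).
    intros z. apply (cat_minus1_exp_le Hmet Hgeod Hcat z Hc); lra. }
  assert (Hweights : al + be <= exp (- (2 / 3 * Rmin u (L - u)))).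
  { unfold al, be. rewrite <- Rdiv_plus_distr. apply sinh_weights_le; lra. }
  replace gb with ga in Hgy_exp by lra.
  enough (gy <= ga - 2 / 3 * Rmin u (L - u)) by lra.
  apply exp_le_inv. unfold Rminus. rewrite exp_plus, (Rmult_comm (exp ga)).
  eapply Rle_trans; [exact Hgy_exp |]. rewrite <- Rmult_plus_distr_r.
  apply Rmult_le_compat_r; [apply Rlt_le, exp_pos | exact Hweights].
Qed.
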